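(* Let $\varphi\in\mathcal{A}$ be w.h.i.s. Then the algebra of Casimirs of $(\mathcal{A},\{\cdot,\cdot\}_\varphi)$ is $H^0(\mathcal{A},\varphi)=\mathrm{Cas}(\mathcal{A},\varphi)=\{f\in\mathcal{A}\mid \vec\nabla f\times\vec\nabla\varphi=\vec 0\}=\bigoplus_{i\in\mathbf{N}}\mathbf{F}\varphi^i=\mathbf{F}[\varphi].$
   Context: $\mathbf{F}$ is a field of characteristic zero and $\mathcal{A}=\mathbf{F}[x,y,z]$. Elements of $\mathcal{A}^3$ are treated as vector fields: $\vec f\cdot\vec g$, $\vec f\times\vec g$ are the usual inner and cross products, $\vec\nabla f=(\partial f/\partial x,\partial f/\partial y,\partial f/\partial z)$, $\vec\nabla\times$ is the curl and $\mathrm{Div}$ the divergence. Fix positive integers $\varpi_1,\varpi_2,\varpi_3$ without common divisor $>1$ (weights of $x,y,z$). A nonzero polynomial is weight homogeneous of degree $d$ if it is an $\mathbf{F}$-linear combination of monomials $x^ay^bz^c$ with $a\varpi_1+b\varpi_2+c\varpi_3=d$; write $\varpi(f)=d$. $\varphi\in\mathcal{A}$ is w.h.i.s. if it is weight homogeneous and $\mathcal{A}_{sing}:=\mathcal{A}/\langle\partial_x\varphi,\partial_y\varphi,\partial_z\varphi\rangle$ is a nonzero finite-dimensional $\mathbf{F}$-vector space. The Poisson bracket $\{\cdot,\cdot\}_\varphi$ on $\mathcal{A}$ is the biderivation determined by $\{x,y\}_\varphi=\partial\varphi/\partial z$, $\{y,z\}_\varphi=\partial\varphi/\partial x$, $\{z,x\}_\varphi=\partial\varphi/\partial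 y$; its Casimirs are the $f$ with $\{f,\cdot\}_\varphi=0$, i.e. $\vec\nabla f\times\vec\nabla\varphi=\vec 0$. *)

From HB Require Import structures.
From mathcomp Require Import all_boot all_order all_algebra.
From mathcomp Require Import mpoly.
Set Implicit Arguments. Unset Strict Implicit. Unset Printing Implicit Defensive.
Import Order.TTheory GRing.Theory.
Local Open Scope ring_scope.

Section Defs.
Variable F : fieldType.
Notation A := {mpoly F[3]}.

Definition vx : 'I_3 := @Ordinal 3 0 isT.
Definition vy : 'I_3 := @Ordinal 3 1 isT.
Definition vz : 'I_3 := @Ordinal 3 2 isT.

Definition dx (f : A) : A := mderiv vx f.
Definition dy (f : A) : A := mderiv vy f.
Definition dz (f : A) : A := mderiv vz f.

Definition mweight (w : 'I_3 -> nat) (m : 'X_{1..3}) : nat :=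
  (\sum_(i < 3) w i * m i)%N.

Definition good_weights (w : 'I_3 -> nat) : Prop :=
  (forall i, 0 < w i)%N /\
  (forall d : nat, d %| w vx -> d %| w vy -> d %| w vz -> d = 1)%N.

Definition weight_homogeneous (w : 'I_3 -> nat) (d : nat) (f : A) : Prop :=
  f != 0 /\ forall m, m \in msupp f -> mweight w m = d.

Definition in_jacobian_ideal (phi g : A) : Prop :=
  exists a b c : A, g = a * dx phi + b * dy phi + c * dz phi.

(* A / <partials> is a finite-dimensional F-vector space: spanned by the
   classes of finitely many polynomials *)
Definition Asing_finite_dim (phi : A) : Prop :=
  exists s : seq A, forall f : A, exists c : nat -> F,
    in_jacobian_ideal phi (f - \sum_(i < size s) c i *: s`_i).

Definition Asing_nonzero (phi : A) : Prop := ~ in_jacobian_ideal phi 1.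

(* weight homogeneous with isolated singularity, for weights w *)
Definition whis (w : 'I_3 -> nat) (phi : A) : Prop :=
  (exists d, weight_homogeneous w d phi) /\
  Asing_finite_dim phi /\ Asing_nonzero phi.

(* Poisson bracket {f,g}_phi: the biderivation with {x,y}=phi_z,
   {y,z}=phi_x, {z,x}=phi_y, i.e. det(grad f, grad g, grad phi) *)
Definition pbracket (phi f g : A) : A :=
    (dx f * dy g - dy f * dx g) * dz phi
  + (dy f * dz g - dz f * dy g) * dx phi
  + (dz f * dx g - dx f * dz g) * dy phi.

Definition casimir (phi f : A) : Prop := forall g : A, pbracket phi f g = 0.

Definition cross_grad_zero (phi f : A) : Prop :=
  [/\ dy f * dz phi - dz f * dy phi = 0,
      dz f * dx phi - dx f * dz phi = 0 &
      dx f * dy phi - dy f * dx phi = 0].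

Definition in_Fphi (phi f : A) : Prop :=
  exists (n : nat) (c : 'I_n -> F), f = \sum_(i < n) c i *: phi ^+ i.

End Defs.

From Pilot Require Import Defs.
From HB Require Import structures.
From mathcomp Require Import all_boot all_order all_algebra.
From mathcomp Require Import mpoly.
From mathcomp Require Import ring.
From Stdlib Require Import IndefiniteDescription.
Set Implicit Arguments. Unset Strict Implicit. Unset Printing Implicit Defensive.
Import GRing.Theory.
Local Open Scope ring_scope.

(* If [grad f x grad phi = 0], the weighted Euler derivative
   [E f = w1 x f_x + w2 y f_y + w3 z f_z] satisfies [E f * phi_j = d phi f_j],
   so [E f] multiplies the Jacobian ideal [J] into [phi A].  Because [phi] is
   weight homogeneous, [J] is graded, and finite dimensionality of [A / J]
   forces pure powers [x^N] and [y^M] into [J]; as these are coprime, [phi]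
   divides [E f], hence [grad f = h grad phi].  The factor [h] again has
   [grad h x grad phi = 0] and smaller degree, so by induction [h] is a
   polynomial in [phi], and integrating in [phi] puts [f] in [F[phi]].  The
   powers of [phi] are independent because [phi^i] has weight [i d], [d > 0]. *)

Section MPolyDerivations.
Variables (n : nat) (R : comNzRingType).
Implicit Types (f g h p q : {mpoly R[n]}) (i j : 'I_n).

Lemma mpolyX_neq0 i : ('X_i : {mpoly R[n]}) != 0.
Proof.
apply/eqP => h; have := congr1 (mcoeff U_(i)) h.
by rewrite mcoeffX eqxx mcoeff0 => /eqP; rewrite oner_eq0.
Qed.

Lemma mderiv_mpolyX i j : mderiv j ('X_i : {mpoly R[n]}) = (i == j)%:R.
Proof.
rewrite mderivX mnm1E; case: (eqVneq i j) => [->|_]; last by rewrite scale0r.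
have -> : (U_(j) - U_(j))%MM = 0%MM by apply/mnmP => l; rewrite mnmBE subnn mnm0E.
by rewrite mpolyX0 scale1r.
Qed.

Lemma mcoeff_mulX_mderiv p i m : ('X_i * mderiv i p)@_m = p@_m *+ m i.
Proof.
rewrite mulrC; have [mi0|mi0] := eqVneq (m i) 0%N.
  rewrite mi0 mulr0n; apply/eqP; rewrite mcoeff_eq0.
  rewrite (perm_mem (msuppMX _ _)); apply/mapP => -[m' _ em].
  by move: mi0; rewrite em mnmDE mnm1E eqxx.
have le : (U_(i) <= m)%MM by rewrite lep1mP.
rewrite -{1}(submK le) addmC mcoeffMX mcoeff_deriv submK //.
by rewrite mnmBE mnm1E eqxx subn1 prednK // lt0n.
Qed.

Lemma mderiv_expS p i k : mderiv i (p ^+ k.+1) = (p ^+ k * mderiv i p) *+ k.+1.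
Proof.
elim: k => [|k IH]; first by rewrite expr1 expr0 mul1r.
by rewrite exprS mderivM IH exprS; ring.
Qed.

Lemma mderiv_sum_powers q j k (c : 'I_k -> R) :
  mderiv j (\sum_(i < k) c i *: q ^+ i) =
  (\sum_(i < k) c i *: (q ^+ i.-1 *+ i)) * mderiv j q.
Proof.
rewrite linear_sum mulr_suml; apply: eq_bigr => i _ /=.
rewrite linearZ -scalerAl /=; congr (_ *: _).
case: (nat_of_ord i) => [|l]; last by rewrite mderiv_expS /= mulrnAl.
by rewrite expr0 mulr0n mul0r -[1]/(1%:MP) mderivC.
Qed.

Lemma mderiv_factor_comm f g h i j :
  mderiv i f = h * mderiv i g -> mderiv j f = h * mderiv j g ->
  mderiv i h * mderiv j g = mderiv j h * mderiv i g.
Proof.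
move=> hi hj; have := mderiv_comm i j f.
rewrite hi hj !mderivM (mderiv_comm i j g) => e.
by apply: (addIr (h * g^`M(j)^`M(i))); rewrite [RHS]addrC -e addrC.
Qed.

Lemma msize_mderiv_lt p i : p != 0 -> (msize (mderiv i p) < msize p)%N.
Proof.
move=> pn0; have hp : (0 < msize p)%N by rewrite lt0n msize_poly_eq0.
rewrite -(prednK hp) ltnS msizeE; apply/bigmax_leqP_seq => m hm _.
have : (m + U_(i))%MM \in msupp p.
  move: hm; rewrite !mcoeff_msupp mcoeff_deriv; apply: contraNneq => ->.
  by rewrite mul0rn.
move/msize_mdeg_lt; rewrite mdegD mdeg1 addn1 => h.
by rewrite -ltnS prednK.
Qed.

Lemma mpolyXn_coprime_dvd p q i j N M : i != j ->
  p * 'X_j ^+ M = q * 'X_i ^+ N -> exists p', p = p' * 'X_i ^+ N.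
Proof.
move=> ij; rewrite !mpolyXn => E.
set mi := (U_(i) *+ N)%MM; set mj := (U_(j) *+ M)%MM.
have le k : k \in msupp p -> (mi <= k)%MM.
  move=> kp.
  have : (mj + k)%MM \in msupp (q * 'X_[mi]).
    by rewrite -E mcoeff_msupp mcoeffMX -mcoeff_msupp.
  rewrite (perm_mem (msuppMX _ _)) => /mapP [m' _ e].
  apply/mnm_lepP => l; rewrite /mi mulmnE mnm1E.
  have [<-|_] := eqVneq i l; last by rewrite mul0n.
  have := congr1 (fun m : 'X_{1..n} => m i) e.
  rewrite !mnmDE /mj !mulmnE !mnm1E eqxx eq_sym (negbTE ij) /= mul0n add0n mul1n => ->.
  exact: leq_addr.
exists (\sum_(k <- msupp p) p@_k *: 'X_[k - mi]).
rewrite mulr_suml {1}[p]mpolyE big_seq [RHS]big_seq; apply: eq_bigr => k kp.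
by rewrite -scalerAl -mpolyXD submK // le.
Qed.

End MPolyDerivations.

Lemma mderiv_eq0_const (n : nat) (F : fieldType) (p : {mpoly F[n]}) :
  [pchar F] =i pred0 -> (forall i, mderiv i p = 0) -> p = (p@_0)%:MP.
Proof.
move=> charF0 dp0; apply/mpolyP => m; rewrite mcoeffC.
have [->|mn0] := eqVneq m 0%MM; first by rewrite mulr1.
rewrite mulr0; have [i mi] : exists i, m i != 0%N.
  apply/existsP; rewrite -negb_forall; apply: contra mn0 => /forallP h.
  by apply/eqP/mnmP => i; rewrite mnm0E; apply/eqP.
have le : (U_(i) <= m)%MM by rewrite lep1mP.
have := congr1 (mcoeff (m - U_(i))%MM) (dp0 i).
rewrite mcoeff_deriv submK // mcoeff0 mnmBE mnm1E eqxx subn1 prednK ?lt0n //.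
move/eqP; rewrite -mulr_natr mulf_eq0 => /orP [/eqP //|].
by move/(pcharf0P _).1: charF0 => ->; rewrite (negbTE mi).
Qed.

Section JacobianIdeal.
Variables (F : fieldType) (phi : {mpoly F[3]}).
Local Notation J := (in_jacobian_ideal phi).

Lemma jacobian_ideal0 : J 0.
Proof. by exists 0, 0, 0; ring. Qed.

Lemma jacobian_idealD a b : J a -> J b -> J (a + b).
Proof.
move=> [a1 [a2 [a3 ->]]] [b1 [b2 [b3 ->]]].
by exists (a1 + b1), (a2 + b2), (a3 + b3); ring.
Qed.

Lemma jacobian_idealMl c b : J b -> J (c * b).
Proof. by move=> [b1 [b2 [b3 ->]]]; exists (c * b1), (c * b2), (c * b3); ring. Qed.

Lemma jacobian_idealZ (c : F) b : J b -> J (c *: b).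
Proof. by rewrite -mul_mpolyC; apply: jacobian_idealMl. Qed.

Lemma jacobian_ideal_sum (I : Type) (r : seq I) (G : I -> {mpoly F[3]}) :
  (forall i, J (G i)) -> J (\sum_(i <- r) G i).
Proof.
move=> JG; elim: r => [|x r IH]; first by rewrite big_nil; apply: jacobian_ideal0.
by rewrite big_cons; apply: jacobian_idealD.
Qed.

Lemma jacobian_ideal_dep (g : nat -> {mpoly F[3]}) : Asing_finite_dim phi ->
  exists n (u : 'I_n -> F) (k0 : 'I_n),
    u k0 != 0 /\ J (\sum_(k < n) u k *: g k).
Proof.
move=> [s Hs]; set N := size s.
have [c Hc] : exists c : nat -> nat -> F,
    forall k, J (g k - \sum_(j < N) c k j *: s`_j).
  exists (fun k => proj1_sig (constructive_indefinite_description _ (Hs (g k)))).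
  by move=> k; case: constructive_indefinite_description.
pose M : 'M[F]_(N.+1, N) := \matrix_(k, j) c k j.
have [r Kr] : exists r, row r (kermx M) != 0.
  have : kermx M != 0.
    rewrite kermx_eq0 -row_leq_rank -ltnNge.
    exact: leq_ltn_trans (rank_leq_col M) (ltnSn N).
  move=> KM; apply/existsP; move: KM; apply: contraNT => /existsPn Kr0.
  apply/eqP/row_matrixP => r.
  by rewrite row0; apply/eqP; move: (Kr0 r); rewrite negbK.
set u := row r (kermx M) in Kr.
have uM (j : 'I_N) : \sum_(k < N.+1) u 0 k * c k j = 0.
  have uM0 : u *m M = 0 by rewrite -row_mul mulmx_ker row0.
  transitivity ((u *m M) 0 j); last by rewrite uM0 mxE.
  by rewrite [RHS]mxE; apply: eq_bigr => k _; rewrite /M !mxE.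
have [k0 uk0] : exists k0, u 0 k0 != 0.
  apply/existsP; move: Kr; apply: contraNT => /existsPn u0.
  by apply/eqP/rowP => k; rewrite [RHS]mxE; apply/eqP; move: (u0 k); rewrite negbK.
exists N.+1, (u 0), k0; split => //.
have -> : \sum_(k < N.+1) u 0 k *: g k =
          \sum_(k < N.+1) u 0 k *: (g k - \sum_(j < N) c k j *: s`_j).
  under [RHS]eq_bigr => k _ do rewrite scalerBr scaler_sumr.
  rewrite sumrB exchange_big /=.
  have -> : \sum_(j < N) \sum_(k < N.+1) u 0 k *: (c k j *: s`_j) = 0.
    apply: big1 => j _; under eq_bigr => k _ do rewrite scalerA.
    by rewrite -scaler_suml uM scale0r.
  by rewrite subr0.
by apply: jacobian_ideal_sum => k; apply: jacobian_idealZ.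
Qed.

End JacobianIdeal.

Section WeightGrading.
Variables (F : fieldType) (w : 'I_3 -> nat).
Local Notation A := {mpoly F[3]}.

Definition isobaric (d : nat) (p : A) :=
  forall m, m \in msupp p -> Defs.mweight w m = d.

Lemma mweightD m1 m2 :
  Defs.mweight w (m1 + m2)%MM = (Defs.mweight w m1 + Defs.mweight w m2)%N.
Proof. by rewrite -big_split /=; apply: eq_bigr => i _; rewrite mnmDE mulnDr. Qed.

Lemma mweightU i : Defs.mweight w U_(i)%MM = w i.
Proof.
rewrite /Defs.mweight (bigD1 i) //= mnm1E eqxx muln1 big1 ?addn0 // => j ji.
by rewrite mnm1E eq_sym (negbTE ji) muln0.
Qed.

Lemma mweight_msupp_mderiv p d i : isobaric d p ->
  forall m, m \in msupp (mderiv i p) -> (Defs.mweight w m + w i)%N = d.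
Proof.
move=> Hp m; rewrite mcoeff_msupp mcoeff_deriv => hm.
rewrite -mweightU -mweightD; apply: Hp; rewrite mcoeff_msupp.
by apply: contraNneq hm => ->; rewrite mul0rn.
Qed.

Lemma isobaric_mderiv p d i : isobaric d p -> isobaric (d - w i) (mderiv i p).
Proof. by move=> Hp m /(mweight_msupp_mderiv Hp) <-; rewrite addnK. Qed.

(* [wgrade p] is [p(t^w1 x, t^w2 y, t^w3 z)], a polynomial in [t] whose
   [k]-th coefficient is the weight-[k] component of [p]. *)
Definition wgrade_scalar : {rmorphism F -> {poly A}} := polyC \o (@mpolyC 3 F).
Definition wgrade_var (i : 'I_3) : {poly A} := ('X_i)%:P * 'X^(w i).
Local Notation wgrade := (mmap wgrade_scalar wgrade_var).

Lemma wgradeX m : wgrade 'X_[m] = ('X_[m])%:P * 'X^(Defs.mweight w m).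
Proof.
rewrite mmapX /mmap1 /wgrade_var.
under eq_bigr => i _ do rewrite exprMn -exprM.
rewrite big_split /= prodrXr.
under eq_bigr => i _ do rewrite -rmorphXn.
by rewrite -rmorph_prod -mpolyXE_id.
Qed.

Lemma coef_wgrade p k :
  (wgrade p)`_k = \sum_(m <- msupp p | Defs.mweight w m == k) p@_m *: 'X_[m].
Proof.
rewrite {1}/mmap coef_sum [RHS]big_mkcond /=; apply: eq_bigr => m _.
rewrite -(mmapX _ wgrade_scalar) wgradeX /wgrade_scalar /= mulrA -rmorphM coefMXn.
case: ltngtP => h //; first by rewrite coefC subn_eq0 leqNgt h.
by rewrite h subnn coefC /= mul_mpolyC.
Qed.

Lemma wgrade_isobaric p e : isobaric e p -> wgrade p = p%:P * 'X^e.
Proof.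
move=> Hp; apply/polyP => k; rewrite coef_wgrade coefMXn coefC subn_eq0.
have [lt_ke|le_ek] := ltnP k e.
  rewrite big_seq_cond big1 // => m /andP [/Hp -> /eqP ek].
  by move: lt_ke; rewrite ek ltnn.
have [->|ne] := eqVneq k e.
  rewrite leqnn [RHS]mpolyE big_seq_cond [RHS]big_seq; apply: eq_bigl => m.
  by case mp: (m \in msupp p); rewrite //= (Hp _ mp) eqxx.
rewrite leq_eqVlt (negbTE ne) ltnNge le_ek big_seq_cond big1 // => m.
by move=> /andP [/Hp -> /eqP ek]; move: ne; rewrite ek eqxx.
Qed.

Lemma coef_wgrade_powers q e n (u : 'I_n -> F) (k0 : 'I_n) :
  (0 < e)%N -> isobaric e q ->
  (wgrade (\sum_(k < n) u k *: q ^+ k))`_(e * k0) = u k0 *: q ^+ k0.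
Proof.
move=> e_gt0 /wgrade_isobaric wq.
have wqk (k : 'I_n) : wgrade (u k *: q ^+ k) = (u k *: q ^+ k)%:P * 'X^(e * k).
  rewrite mmapZ rmorphXn /= wq exprMn -exprM /wgrade_scalar /=.
  by rewrite mulrA -rmorphXn -rmorphM mul_mpolyC.
rewrite rmorph_sum coef_sum (bigD1 k0) //= big1 ?addr0.
  by rewrite wqk coefCM coefXn eqxx mulr1.
move=> k kk0; rewrite wqk coefCM coefXn eqn_pmul2l //.
by rewrite eq_sym val_eqE (negbTE kk0) mulr0.
Qed.

Lemma isobaric_powers_free q e n (c : 'I_n -> F) :
  (0 < e)%N -> isobaric e q -> q != 0 ->
  \sum_(i < n) c i *: q ^+ i = 0 -> forall i, c i = 0.
Proof.
move=> e_gt0 Hq qn0 sum0 i; have := coef_wgrade_powers c i e_gt0 Hq.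
rewrite sum0 raddf0 coef0 => /esym /eqP.
by rewrite scaler_eq0 (negbTE (expf_neq0 _ qn0)) orbF => /eqP.
Qed.

Variable phi : A.
Local Notation J := (in_jacobian_ideal phi).

Lemma jacobian_ideal_coef_wgrade d g k : isobaric d phi -> J g -> J ((wgrade g)`_k).
Proof.
move=> Hphi [a [b [c ->]]].
have wd i : wgrade (mderiv i phi) = (mderiv i phi)%:P * 'X^(d - w i).
  exact/wgrade_isobaric/isobaric_mderiv.
have coefM_homog (P : {poly A}) (q : A) e :
    (P * (q%:P * 'X^e))`_k = (if (k < e)%N then 0 else P`_(k - e)) * q.
  by rewrite mulrA coefMXn; case: ifP; rewrite ?mul0r // coefMC.
rewrite !rmorphD !rmorphM /= /dx /dy /dz !wd !coefD !coefM_homog.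
by apply: jacobian_idealD; [apply: jacobian_idealD|]; apply: jacobian_idealMl;
  [exists 1, 0, 0|exists 0, 1, 0|exists 0, 0, 1]; ring.
Qed.

Lemma jacobian_ideal_mpolyXn d i : (0 < w i)%N -> isobaric d phi ->
  Asing_finite_dim phi -> exists N, J ('X_i ^+ N).
Proof.
move=> wi_gt0 Hphi /(jacobian_ideal_dep (fun k => 'X_i ^+ k)) [n [u [k0 [uk0 Ju]]]].
have Xi : isobaric (w i) 'X_i.
  by move=> m; rewrite msuppX mem_seq1 => /eqP ->; apply: mweightU.
have := jacobian_ideal_coef_wgrade (w i * k0) Hphi Ju.
rewrite coef_wgrade_powers // => /(jacobian_idealZ (u k0)^-1).
by rewrite scalerA mulVf // scale1r; exists k0.
Qed.

End WeightGrading.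

Lemma ord3_ind (P : 'I_3 -> Prop) : P vx -> P vy -> P vz -> forall i, P i.
Proof.
by move=> Px Py Pz [[|[|[|//]]] i]; [move: Px|move: Py|move: Pz];
  congr P; apply: val_inj.
Qed.

Lemma msize_factor_lt (n : nat) (F : fieldType) (f g h : {mpoly F[n]}) i :
  mderiv i f = h * mderiv i g -> mderiv i f != 0 -> (msize h < msize f)%N.
Proof.
move=> fgh dfn0.
have fn0 : f != 0 by apply: contraNneq dfn0 => ->; rewrite linear0.
have hn0 : h != 0 by apply: contraNneq dfn0 => h0; rewrite fgh h0 mul0r.
have dgn0 : mderiv i g != 0 by apply: contraNneq dfn0 => g0; rewrite fgh g0 mulr0.
apply: leq_ltn_trans (msize_mderiv_lt i fn0); rewrite fgh msizeM //.
have : (0 < msize (mderiv i g))%N by rewrite lt0n msize_poly_eq0.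
by case: (msize (mderiv i g)) => // k _; rewrite addnS /= leq_addr.
Qed.

Section Casimirs.
Variables (F : fieldType) (phi : {mpoly F[3]}).
Local Notation A := {mpoly F[3]}.

Lemma casimir_cross_grad_zero f : casimir phi f <-> cross_grad_zero phi f.
Proof.
split=> [Cf|[c1 c2 c3] g].
  have := Cf 'X_vx; have := Cf 'X_vy; have := Cf 'X_vz.
  rewrite /pbracket /dx /dy /dz !mderiv_mpolyX /= => ez ey ex.
  by split; apply/eqP; rewrite -oppr_eq0; apply/eqP;
    [rewrite -ex|rewrite -ey|rewrite -ez]; ring.
rewrite /pbracket; transitivity (- (dx g * (dy f * dz phi - dz f * dy phi)
    + dy g * (dz f * dx phi - dx f * dz phi)
    + dz g * (dx f * dy phi - dy f * dx phi))); first by ring.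
by rewrite c1 c2 c3 !mulr0 !addr0 oppr0.
Qed.

Lemma in_Fphi_cross_grad_zero f : in_Fphi phi f -> cross_grad_zero phi f.
Proof.
by move=> [n [c ->]]; rewrite /cross_grad_zero /dx /dy /dz !mderiv_sum_powers; split; ring.
Qed.

Lemma cross_grad_zero_of_factor f h :
  (forall i, mderiv i f = h * mderiv i phi) -> cross_grad_zero phi h.
Proof.
move=> fh; split; apply/eqP; rewrite subr_eq0; apply/eqP;
  exact: mderiv_factor_comm (fh _) (fh _).
Qed.

Lemma in_Fphi_antiderivative f h : [pchar F] =i pred0 ->
  in_Fphi phi h -> (forall i, mderiv i f = h * mderiv i phi) -> in_Fphi phi f.
Proof.
move=> charF0 [k [c hc]] fh.
(* Term-by-term antiderivative [G = \sum_j c_j phi^(j+1) / (j+1)] of [h]. *)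
pose c' (i : 'I_k.+1) : F := if unlift ord0 i is Some j then c j / (j.+1)%:R else 0.
pose G := \sum_(i < k.+1) c' i *: phi ^+ i.
have dG j : mderiv j G = h * mderiv j phi.
  rewrite mderiv_sum_powers hc big_ord_recl /c' unlift_none mulr0n scaler0 add0r.
  congr (_ * _); apply: eq_bigr => i _; rewrite liftK /= -scaler_nat scalerA.
  by rewrite -mulrA mulVf ?mulr1 // (pcharf0P _).1.
have constfG : f - G = ((f - G)@_0)%:MP.
  by apply: mderiv_eq0_const => // j; rewrite linearB /= fh dG subrr.
exists k.+1, (fun i => c' i + (if i == ord0 then (f - G)@_0 else 0)).
under eq_bigr => i _ do rewrite scalerDl.
rewrite big_split /= -/G big_ord_recl eqxx expr0 big1 => [|i _]; last by rewrite scale0r.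
by rewrite addr0 -mul_mpolyC mulr1 -constfG addrC subrK.
Qed.

End Casimirs.

Section EulerFactorization.
Variables (F : fieldType) (w : 'I_3 -> nat).
Local Notation A := {mpoly F[3]}.

Definition weuler (f : A) : A :=
  (w vx)%:R *: ('X_vx * dx f) + (w vy)%:R *: ('X_vy * dy f)
  + (w vz)%:R *: ('X_vz * dz f).

Lemma weuler_isobaric d p : isobaric w d p -> weuler p = d%:R *: p.
Proof.
move=> Hp; apply/mpolyP => m.
rewrite !mcoeffD !mcoeffZ /dx /dy /dz !mcoeff_mulX_mderiv.
have [pm0|pm0] := eqVneq p@_m 0; first by rewrite pm0 !mul0rn !mulr0 !addr0.
have := Hp m; rewrite mcoeff_msupp => /(_ pm0) <-.
have -> : Defs.mweight w m = (w vx * m vx + w vy * m vy + w vz * m vz)%N.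
  rewrite /Defs.mweight !big_ord_recl big_ord0 addn0 addnA.
  by congr (w _ * m _ + w _ * m _ + w _ * m _)%N; apply: val_inj.
by rewrite !natrD !natrM -!(mulr_natr (p@_m)); ring.
Qed.

Variable phi : A.

Lemma weuler_cross_grad_zero f : cross_grad_zero phi f ->
  [/\ weuler f * dx phi = dx f * weuler phi,
      weuler f * dy phi = dy f * weuler phi &
      weuler f * dz phi = dz f * weuler phi].
Proof.
move=> [c1 c2 c3]; rewrite /weuler -!mul_mpolyC.
split; apply/eqP; rewrite -subr_eq0; apply/eqP.
- transitivity ((w vy)%:R%:MP * 'X_vy * (-(dx f * dy phi - dy f * dx phi))
                + (w vz)%:R%:MP * 'X_vz * (dz f * dx phi - dx f * dz phi)).
    by ring.
  by rewrite c2 c3 oppr0 !mulr0 addr0.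
- transitivity ((w vx)%:R%:MP * 'X_vx * (dx f * dy phi - dy f * dx phi)
                + (w vz)%:R%:MP * 'X_vz * (-(dy f * dz phi - dz f * dy phi))).
    by ring.
  by rewrite c1 c3 oppr0 !mulr0 addr0.
- transitivity ((w vx)%:R%:MP * 'X_vx * (-(dz f * dx phi - dx f * dz phi))
                + (w vy)%:R%:MP * 'X_vy * (dy f * dz phi - dz f * dy phi)).
    by ring.
  by rewrite c1 c2 oppr0 !mulr0 addr0.
Qed.

Variable d : nat.
Hypothesis phi_isobaric : isobaric w d phi.

Lemma weuler_mul_jacobian f g : cross_grad_zero phi f ->
  in_jacobian_ideal phi g -> exists b, weuler f * g = phi * b.
Proof.
move=> /weuler_cross_grad_zero [ex ey ez] [a [b [c ->]]].
exists (d%:R *: (a * dx f + b * dy f + c * dz f)).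
transitivity (a * (weuler f * dx phi) + b * (weuler f * dy phi)
              + c * (weuler f * dz phi)); first by ring.
by rewrite ex ey ez (weuler_isobaric phi_isobaric) -!mul_mpolyC; ring.
Qed.

(* [phi] divides [weuler f * x^Nx] and [weuler f * y^Ny], and [x^Nx], [y^Ny]
   are coprime. *)
Lemma weuler_dvd f Nx Ny : phi != 0 ->
  in_jacobian_ideal phi ('X_vx ^+ Nx) -> in_jacobian_ideal phi ('X_vy ^+ Ny) ->
  cross_grad_zero phi f -> exists a, weuler f = phi * a.
Proof.
move=> phin0 Jx Jy cf.
have [a ha] := weuler_mul_jacobian cf Jx.
have [b hb] := weuler_mul_jacobian cf Jy.
have [a' ea'] : exists a', a = a' * 'X_vx ^+ Nx.
  apply: (@mpolyXn_coprime_dvd _ _ a b vx vy Nx Ny isT); apply: (mulfI phin0).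
  by rewrite !mulrA -ha -hb -!mulrA [_ ^+ Nx * _]mulrC.
exists a'; apply: (mulIf (expf_neq0 Nx (mpolyX_neq0 _ vx))).
by rewrite ha ea' mulrA.
Qed.

Lemma cross_grad_zero_factor f Nx Ny : phi != 0 -> d%:R != 0 :> F ->
  in_jacobian_ideal phi ('X_vx ^+ Nx) -> in_jacobian_ideal phi ('X_vy ^+ Ny) ->
  cross_grad_zero phi f -> exists h, forall i, mderiv i f = h * mderiv i phi.
Proof.
move=> phin0 dn0 Jx Jy cf; have [a ea] := weuler_dvd phin0 Jx Jy cf.
have [ex ey ez] := weuler_cross_grad_zero cf.
exists ((d%:R)^-1 *: a).
have factor (fj pj : A) : weuler f * pj = fj * weuler phi -> fj = (d%:R^-1 *: a) * pj.
  rewrite ea (weuler_isobaric phi_isobaric) -!mul_mpolyC => e.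
  have /(mulfI phin0) e' : phi * (a * pj) = phi * (d%:R%:MP * fj).
    by rewrite mulrA e; ring.
  by rewrite -mulrA e' mulrA -rmorphM mulVf // rmorph1 mul1r.
by apply: ord3_ind; apply: factor.
Qed.

End EulerFactorization.

Lemma cross_grad_zero_in_Fphi (F : fieldType) (w : 'I_3 -> nat) (phi : {mpoly F[3]})
    d Nx Ny : [pchar F] =i pred0 -> isobaric w d phi -> phi != 0 -> d%:R != 0 :> F ->
  in_jacobian_ideal phi ('X_vx ^+ Nx) -> in_jacobian_ideal phi ('X_vy ^+ Ny) ->
  forall f, cross_grad_zero phi f -> in_Fphi phi f.
Proof.
move=> charF0 Hphi phin0 dn0 Jx Jy f.
elim: {f}(msize f).+1 {-2}f (ltnSn (msize f)) => // n IH f lt_fn cf.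
have [/forallP df0|/forallPn [i dfi]] := boolP [forall i, mderiv i f == 0].
  exists 1%N, (fun _ => f@_0); rewrite big_ord1 expr0 -mul_mpolyC mulr1.
  by apply: mderiv_eq0_const => // i; apply/eqP.
have [h fh] := cross_grad_zero_factor Hphi phin0 dn0 Jx Jy cf.
apply: (in_Fphi_antiderivative charF0 _ fh); apply: IH.
  by rewrite -ltnS; apply: leq_trans lt_fn; apply: msize_factor_lt (fh i) dfi.
exact: cross_grad_zero_of_factor fh.
Qed.

Lemma isobaric_weight_gt0 (F : fieldType) (w : 'I_3 -> nat) (phi : {mpoly F[3]}) d i N :
  (forall j, 0 < w j)%N -> isobaric w d phi ->
  in_jacobian_ideal phi ('X_i ^+ N) -> (0 < d)%N.
Proof.
move=> w_gt0 Hphi [a [b [c eX]]]; rewrite lt0n; apply/eqP => d0.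
have dphi0 j : mderiv j phi = 0.
  apply/eqP; rewrite -msupp_eq0; apply/eqP.
  case E: (msupp _) => [//|m s].
  have : m \in msupp (mderiv j phi) by rewrite E mem_head.
  move/(mweight_msupp_mderiv Hphi)/eqP.
  by rewrite d0 addn_eq0 (negbTE (lt0n_neq0 (w_gt0 j))) andbF.
move: eX; rewrite /dx /dy /dz !dphi0 !mulr0 !addr0; apply/eqP.
exact/expf_neq0/mpolyX_neq0.
Qed.

Theorem mainTheorem3 (F : fieldType) (charF0 : [pchar F] =i pred0)
  (w : 'I_3 -> nat) (hw : good_weights w) (phi : {mpoly F[3]})
  (hphi : whis w phi) :
  (forall f : {mpoly F[3]},
     (casimir phi f <-> cross_grad_zero phi f) /\
     (cross_grad_zero phi f <-> in_Fphi phi f)) /\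
  (* the sum  \sum_i F phi^i  is direct *)
  (forall (n : nat) (c : 'I_n -> F),
     \sum_(i < n) c i *: phi ^+ i = 0 -> forall i, c i = 0).
Proof.
case: hw => w_gt0 _; case: hphi => [[d [phin0 Hphi]] [fin _]].
have [Nx Jx] := jacobian_ideal_mpolyXn (w_gt0 vx) Hphi fin.
have [Ny Jy] := jacobian_ideal_mpolyXn (w_gt0 vy) Hphi fin.
have d_gt0 : (0 < d)%N := isobaric_weight_gt0 w_gt0 Hphi Jx.
have dn0 : d%:R != 0 :> F by rewrite (pcharf0P _).1 // -lt0n.
split=> [f|n c]; last exact: isobaric_powers_free d_gt0 Hphi phin0.
split; first exact: casimir_cross_grad_zero.
split; last exact: in_Fphi_cross_grad_zero.
exact: cross_grad_zero_in_Fphi charF0 Hphi phin0 dn0 Jx Jy f.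
Qed.
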